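(* Let $f:\mathbb Z^2_e\to\mathbb P^3$ and $G:\mathbb Z^2_o\to\{\text{planes in }\mathbb P^3\}$ be generic, and consider the tiling of the plane by the square lattice graph on $\mathbb Z^2$ (edges between lattice-adjacent points, faces the unit squares), with vertex $(i,j)\in\mathbb Z^2_e$ white and labeled by the point $f_{i,j}$, and vertex $(i,j)\in\mathbb Z^2_o$ black and labeled by the plane $G_{i,j}$. Then: (V) the labels of the neighbors of each vertex form a circuit if and only if $f$ is a $Q$-net and $G$ is a $Q^*$-net; and, assuming this, (F) every unit-square face is coherent if and only if $f$ and $g$ are $F$-transforms of each other, where $g:\mathbb Z^2_e\to\mathbb P^3$ is given by $g_{i,j}=G_{i-1,j}\cap G_{i,j-1}\cap G_{i+1,j}\cap G_{i,j+1}$.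
   Context: $\mathbb Z^2_e=\{(i,j): i+j\text{ even}\}$, $\mathbb Z^2_o=\{(i,j): i+j\text{ odd}\}$. A map $f$ from $\mathbb Z^2_e$ (resp. $\mathbb Z^2_o$) to $\mathbb P^3$ is a $Q$-net if for every $(i,j)\in\mathbb Z^2_o$ (resp. $\mathbb Z^2_e$) the four points $f_{i\pm1,j},f_{i,j\pm1}$ are coplanar. A $Q^*$-net is the dual notion: a map to planes such that the four planes $G_{i\pm1,j},G_{i,j\pm1}$ share a common point. Two $Q$-nets $f,g$ with the same domain are $F$-transforms of each other if for every $(i,j)$ in the domain and each sign the four points $f_{i,j},g_{i,j},f_{i+1,j\pm1},g_{i+1,j\pm1}$ are coplanar. A circuit is a linearly dependent set of points (or planes, viewed in the dual space) all of whose proper subsets are independent. A face with vertices labeled by points $A_1,\dots,A_n$ and planes $\ell_1,\dots,\ell_n$ in cyclic (clockwise) order is coherent if the multi-ratio $\frac{\boldsymbol\ell_1(\mathbf A_1)\cdots\boldsymbol\ell_n(\mathbf A_n)}{\boldsymbol\ell_1(\mathbf A_2)\cdots\boldsymbol\ell_n(\mathbf A_1)}$ of lifts to vectors/covectors of $\mathbb C^4$ equals $1$; for a quadrilateral with points $A,B$ and planes $c,d$ this holds iff $A=B$, or $c=d$, or the line $AB$ meets the line $c\cap d$. Generic means all labels are distinct and in general position apart from the imposed conditions. *)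

(* Points of P^3 = nonzero vectors of C^4 (up to scaling);
   planes of P^3 = nonzero covectors of C^4 (up to scaling), both encoded as
   row vectors 'rV[CC]_4; the pairing of a covector with a vector is the dot
   product. *)
From mathcomp Require Import all_boot all_algebra.
From mathcomp Require Import complex.
From mathcomp Require Import Rstruct.
Set Implicit Arguments. Unset Strict Implicit. Unset Printing Implicit Defensive.
Import GRing.Theory.
Local Open Scope ring_scope.

Definition CC : fieldType := (Rdefinitions.R)[i].

Definition vec4 := 'rV[CC]_4.

Definition pairing (l A : vec4) : CC := \sum_(k < 4) l 0 k * A 0 k.

Definition pt := (int * int)%type.
Definition is_even (p : pt) : bool := ~~ odd (absz (p.1 + p.2)).
Definition is_odd  (p : pt) : bool := odd (absz (p.1 + p.2)).

Definition nbrs (p : pt) : seq pt :=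
  [:: (p.1 + 1, p.2); (p.1 - 1, p.2); (p.1, p.2 + 1); (p.1, p.2 - 1)].

Definition dependent (s : seq vec4) : Prop := ~~ free s.

Definition circuit (s : seq vec4) : Prop :=
  dependent s /\
  forall m : bitseq, size m = size s -> has negb m -> free (mask m s).

(* Four points are coplanar iff their lifts are linearly dependent. *)
Definition coplanar4 (a b c d : vec4) : Prop := dependent [:: a; b; c; d].
(* Four planes share a common point iff their lifts (covectors) are
   linearly dependent. *)
Definition concurrent4 (a b c d : vec4) : Prop := dependent [:: a; b; c; d].

Definition Qnet_e (f : int -> int -> vec4) : Prop :=
  forall i j : int, is_odd (i, j) ->
    coplanar4 (f (i + 1) j) (f (i - 1) j) (f i (j + 1)) (f i (j - 1)).

Definition Qstarnet_o (G : int -> int -> vec4) : Prop :=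
  forall i j : int, is_even (i, j) ->
    concurrent4 (G (i + 1) j) (G (i - 1) j) (G i (j + 1)) (G i (j - 1)).

Definition F_transforms (f g : int -> int -> vec4) : Prop :=
  forall i j : int, is_even (i, j) -> forall s : int, (s = 1 \/ s = -1) ->
    coplanar4 (f i j) (g i j) (f (i + 1) (j + s)) (g (i + 1) (j + s)).

(* Multi-ratio of a face with point labels A_1..A_n and plane labels
   l_1..l_n in cyclic clockwise order A_1, l_1, A_2, l_2, ..., A_n, l_n. *)
Definition multiratio (As ls : seq vec4) : CC :=
  let n := size As in
  (\prod_(k < n) pairing (nth 0 ls k) (nth 0 As k)) /
  (\prod_(k < n) pairing (nth 0 ls k) (nth 0 As ((k + 1) %% n)%N)).

Definition coherent (As ls : seq vec4) : Prop := multiratio As ls = 1.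

(* The unit square face with lower-left corner (i,j), read clockwise
   (i,j) -> (i,j+1) -> (i+1,j+1) -> (i+1,j) starting at its white vertex. *)
Definition face_coherent (f G : int -> int -> vec4) (i j : int) : Prop :=
  if is_even (i, j) then
    coherent [:: f i j; f (i + 1) (j + 1)] [:: G i (j + 1); G (i + 1) j]
  else
    coherent [:: f i (j + 1); f (i + 1) j] [:: G (i + 1) (j + 1); G i j].

Definition nbr_labels (f G : int -> int -> vec4) (p : pt) : seq vec4 :=
  if is_even p then [seq G q.1 q.2 | q <- nbrs p]
  else [seq f q.1 q.2 | q <- nbrs p].

Definition is_meet_point (G : int -> int -> vec4) (i j : int) (x : vec4) : Prop :=
  x != 0 /\ forall q, q \in nbrs (i, j) -> pairing (G q.1 q.2) x = 0.

(* Genericity: all labels distinct and in general position apart from the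
   imposed (Q-net / Q*-net) conditions:
   - any family of at most four points f at pairwise distinct even positions
     is independent unless these positions are exactly the four neighbours of
     an odd vertex (the only imposed coplanarities);
   - dually for the planes G at odd positions;
   - no point f lies on any plane G. *)
Definition generic (f G : int -> int -> vec4) : Prop :=
  (forall s : seq pt, uniq s -> (size s <= 4)%N -> all is_even s ->
     ~ (exists p, is_odd p /\ perm_eq s (nbrs p)) ->
     free [seq f q.1 q.2 | q <- s]) /\
  (forall s : seq pt, uniq s -> (size s <= 4)%N -> all is_odd s ->
     ~ (exists p, is_even p /\ perm_eq s (nbrs p)) ->
     free [seq G q.1 q.2 | q <- s]) /\
  (forall p q : pt, is_even p -> is_odd q -> pairing (G q.1 q.2) (f p.1 p.2) != 0).

From HB Require Import structures.
From mathcomp Require Import all_boot all_algebra.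
From mathcomp Require Import complex Rstruct.
From mathcomp Require Import zify ring.
Set Implicit Arguments.
Unset Strict Implicit.
Unset Printing Implicit Defensive.
Import GRing.Theory.
Local Open Scope ring_scope.

(* The vertex part is a reformulation: the four labels around a vertex are
   dependent exactly when the Q-net (resp. Q*-net) condition holds there, and
   genericity makes every proper subfamily independent.  For a face with white
   corners A, B and black corners c, d, the meet points x = g_A and y = g_B both
   lie on c and d, so they span the line c ∩ d.  The multi-ratio
   c(A) d(B) / (c(B) d(A)) equals 1 iff the plane d(B) c - c(B) d of the pencil
   through c ∩ d also contains A (it always contains B), i.e. iff A, x, B, y
   are coplanar; along the diagonals of the unit squares this is exactly the
   F-transform condition. *)

Lemma pairing_is_linear (l : vec4) : linear (pairing l).
Proof.
move=> a u v; rewrite /pairing -[a *: \sum_(k < 4) _]/(a * _) mulr_sumr -big_split.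
by apply: eq_bigr => k _; rewrite !mxE mulrDr mulrCA.
Qed.

HB.instance Definition _ (l : vec4) :=
  GRing.isLinear.Build CC vec4 CC *%R (pairing l) (pairing_is_linear l).

Lemma pairingC (l A : vec4) : pairing l A = pairing A l.
Proof. by apply: eq_bigr => k _; rewrite mulrC. Qed.

Lemma free2_coef_eq0 (K : fieldType) (V : vectType K) (u v : V) (a b : K) :
  free [:: u; v] -> a *: u + b *: v = 0 -> a = 0 /\ b = 0.
Proof.
move=> /(@freeP _ _ 2 [tuple u; v]) uv_free uv0.
have coef0 := uv_free (fun i => [:: a; b]`_i).
rewrite !big_ord_recl big_ord0 addr0 in coef0.
by split; [exact: (coef0 uv0 ord0) | exact: (coef0 uv0 (lift ord0 ord0))].
Qed.

Lemma free4_intro (K : fieldType) (V : vectType K) (u1 u2 u3 u4 : V) :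
  (forall k1 k2 k3 k4 : K, k1 *: u1 + k2 *: u2 + k3 *: u3 + k4 *: u4 = 0 ->
     [/\ k1 = 0, k2 = 0, k3 = 0 & k4 = 0]) ->
  free [:: u1; u2; u3; u4].
Proof.
move=> u_indep; apply/(@freeP _ _ 4 [tuple u1; u2; u3; u4]) => k.
rewrite !big_ord_recl big_ord0 addr0 !addrA => /u_indep[k1 k2 k3 k4].
by case=> -[|[|[|[|//]]]] i_lt;
  [rewrite -k1 | rewrite -k2 | rewrite -k3 | rewrite -k4]; congr k; apply: val_inj.
Qed.

Lemma det2_coef_eq0 (K : fieldType) (a b a' b' k l : K) :
  a * b' != b * a' -> k * a + l * b = 0 -> k * a' + l * b' = 0 -> k = 0 /\ l = 0.
Proof.
rewrite -subr_eq0 => det_neq0 E E'.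
have kdet : k * (a * b' - b * a') = b' * (k * a + l * b) - b * (k * a' + l * b') by ring.
have ldet : l * (a * b' - b * a') = a * (k * a' + l * b') - a' * (k * a + l * b) by ring.
rewrite E E' !mulr0 subrr in kdet ldet.
by split; apply/eqP; [move/eqP: kdet | move/eqP: ldet];
  rewrite mulf_eq0 (negPf det_neq0) orbF.
Qed.

Lemma annihilated_by_free4_eq0 (s : seq vec4) (x : vec4) :
  free s -> size s = 4%N -> (forall l, l \in s -> pairing l x = 0) -> x = 0.
Proof.
move=> s_free s4 sx; apply/rowP => k.
have s_full : (<<s>> = fullv)%VS.
  by apply/eqP; rewrite eqEdim subvf (eqP s_free) s4 dimvf dim_matrix.
pose e : vec4 := \row_j (j == k)%:R.
have e_span : e \in <<in_tuple s>>%VS by rewrite s_full memvf.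
have : pairing e x = 0.
  rewrite pairingC (coord_span e_span) linear_sum big1 // => i _.
  by rewrite linearZ /= pairingC sx ?mulr0 // mem_nth.
rewrite /pairing (bigD1 k) //= big1 => [|j /negPf jk]; last by rewrite !mxE jk mul0r.
by rewrite !mxE eqxx mul1r addr0 => ->.
Qed.

Lemma multiratio2 (A B c d : vec4) :
  multiratio [:: A; B] [:: c; d] =
  (pairing c A * pairing d B) / (pairing c B * pairing d A).
Proof. by rewrite /multiratio /= !big_ord_recl !big_ord0 /= !mulr1. Qed.

Lemma coherent2C (A B c d : vec4) :
  coherent [:: A; B] [:: d; c] <-> coherent [:: A; B] [:: c; d].
Proof.
rewrite /coherent !multiratio2 [pairing d A * _]mulrC [pairing d B * _]mulrC -invf_div.
by split=> [/eqP|->]; rewrite ?invr1 // invr_eq1 => /eqP.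
Qed.

Section CrossRatio.
Variables A B x y c d : vec4.
Hypotheses (cx : pairing c x = 0) (dx : pairing d x = 0).
Hypotheses (cy : pairing c y = 0) (dy : pairing d y = 0).

Lemma dependent_of_cross_eq :
  free [:: c; d] -> pairing d B != 0 ->
  pairing c A * pairing d B = pairing c B * pairing d A -> dependent [:: A; x; B; y].
Proof.
move=> cd_free dB_neq0 cross; apply/negP => AxBy_free.
have w0 : pairing d B *: c + (- pairing c B) *: d = 0.
  apply: (annihilated_by_free4_eq0 AxBy_free) => // v.
  rewrite linearD !linearZ /= !(pairingC v) mulNr.
  rewrite !inE => /or4P[] /eqP ->; rewrite ?cx ?dx ?cy ?dy ?mulr0 ?oppr0 ?addr0 //.
    by rewrite mulrC cross subrr.
  by rewrite mulrC subrr.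
by have [/eqP] := free2_coef_eq0 cd_free w0; rewrite (negPf dB_neq0).
Qed.

Lemma cross_eq_of_dependent :
  free [:: x; y] -> dependent [:: A; x; B; y] ->
  pairing c A * pairing d B = pairing c B * pairing d A.
Proof.
move=> xy_free; apply: contraNeq => cross_neq; apply: free4_intro => k1 k2 k3 k4 E.
have Ec := congr1 (pairing c) E; have Ed := congr1 (pairing d) E.
rewrite !linearD !linearZ /= cx cy linear0 !mulr0 !addr0 in Ec.
rewrite !linearD !linearZ /= dx dy linear0 !mulr0 !addr0 in Ed.
have [k10 k30] := det2_coef_eq0 cross_neq Ec Ed.
rewrite k10 k30 !scale0r add0r addr0 in E.
by have [k20 k40] := free2_coef_eq0 xy_free E.
Qed.

Lemma coherent2_dependent :
  free [:: c; d] -> free [:: x; y] ->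
  pairing c B != 0 -> pairing d A != 0 -> pairing d B != 0 ->
  coherent [:: A; B] [:: c; d] <-> dependent [:: A; x; B; y].
Proof.
move=> cd_free xy_free cB_neq0 dA_neq0 dB_neq0.
have den_neq0 : pairing c B * pairing d A != 0 by rewrite mulf_neq0.
rewrite /coherent multiratio2; split=> [mr1 | dep].
- apply: dependent_of_cross_eq => //.
  by rewrite -[LHS](divfK den_neq0) mr1 mul1r.
- by rewrite cross_eq_of_dependent // divff.
Qed.

End CrossRatio.

Ltac lattice_arith :=
  unfold nbrs, is_odd, is_even in *; cbn [fst snd] in *;
  rewrite ?inE /= ?inE ?xpair_eqE /=; lia.

Lemma nbrs_uniq p : uniq (nbrs p).
Proof. case: p => a b; lattice_arith. Qed.

Lemma parity_nbrs p q : q \in nbrs p -> is_odd q = is_even p.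
Proof.
by case: p q => [a b] [c d] /= q_nbr; apply/idP/idP; move: q_nbr; lattice_arith.
Qed.

Lemma is_evenE p : is_even p = ~~ is_odd p.
Proof. by []. Qed.

Lemma all_odd_nbrs p : is_even p -> all is_odd (nbrs p).
Proof. by move=> p_even; apply/allP => q /parity_nbrs ->. Qed.

Lemma all_even_nbrs p : is_odd p -> all is_even (nbrs p).
Proof.
move=> p_odd; apply/allP => q /parity_nbrs q_odd.
by rewrite is_evenE q_odd is_evenE p_odd.
Qed.

Lemma not_perm_nbrs_far (s : seq pt) (a b : pt) :
  a \in s -> b \in s -> b.1 = a.1 + 3 -> forall p, ~ perm_eq s (nbrs p).
Proof.
move=> a_s b_s ab [p1 p2] /perm_mem s_nbrs; move: a_s b_s ab; rewrite !s_nbrs.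
by case: a b => [a1 a2] [b1 b2]; lattice_arith.
Qed.

(* [generic f G] unfolds to [general_position is_even is_odd f /\
   general_position is_odd is_even G /\ _]. *)
Definition general_position (P Q : pred pt) (F : int -> int -> vec4) : Prop :=
  forall s : seq pt, uniq s -> (size s <= 4)%N -> all P s ->
    ~ (exists p, Q p /\ perm_eq s (nbrs p)) -> free [seq F q.1 q.2 | q <- s].

Section GeneralPosition.
Variables (P Q : pred pt) (F : int -> int -> vec4).
Hypothesis F_gp : general_position P Q F.

Lemma gp_free_mask_nbrs p (m : bitseq) :
  all P (nbrs p) -> size m = 4%N -> has negb m ->
  free (mask m [seq F q.1 q.2 | q <- nbrs p]).
Proof.
move=> P_nbrs m4 m_proper; rewrite -map_mask.
have mask_small : (size (mask m (nbrs p)) < 4)%N.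
  rewrite size_mask ?m4 // ltn_neqAle -{1}m4 -all_count -has_predC m_proper.
  by rewrite -m4 count_size.
apply: F_gp.
- exact/mask_uniq/nbrs_uniq.
- exact: ltnW.
- by apply/allP => q /mem_mask /(allP P_nbrs).
- by case=> r [_ /perm_size]; rewrite /= => size_eq; rewrite size_eq in mask_small.
Qed.

Lemma gp_free2 p q : P p -> P q -> p != q -> free [:: F p.1 p.2; F q.1 q.2].
Proof.
move=> Pp Pq pq; apply: (F_gp (s := [:: p; q])) => /=.
- by rewrite inE pq.
- by [].
- by rewrite Pp Pq.
- by case=> r [_ /perm_size].
Qed.

Lemma gp_annihilated_eq0 (s : seq pt) (x : vec4) :
  uniq s -> size s = 4%N -> all P s -> (forall p, ~ perm_eq s (nbrs p)) ->
  (forall q, q \in s -> pairing (F q.1 q.2) x = 0) -> x = 0.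
Proof.
move=> s_uniq s4 P_s s_not_nbrs sx.
apply: (@annihilated_by_free4_eq0 [seq F q.1 q.2 | q <- s]).
- by apply: F_gp; rewrite ?s4 // => -[r [_ /s_not_nbrs]].
- by rewrite size_map.
- by move=> _ /mapP[q q_s ->]; apply: sx.
Qed.

Lemma gp_free_incident2 (s : seq pt) (x y : vec4) :
  x != 0 -> y != 0 ->
  uniq s -> size s = 4%N -> all P s -> (forall p, ~ perm_eq s (nbrs p)) ->
  (forall q, q \in s -> pairing (F q.1 q.2) x = 0 \/ pairing (F q.1 q.2) y = 0) ->
  free [:: x; y].
Proof.
move=> x_neq0 y_neq0 s_uniq s4 P_s s_not_nbrs sxy.
rewrite free_cons span_seq1 seq1_free y_neq0 andbT; apply/vlineP => -[k x_ky].
have k_neq0 : k != 0 by apply: contraNneq x_neq0 => k0; rewrite x_ky k0 scale0r.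
move/eqP: y_neq0; apply; apply: (gp_annihilated_eq0 s_uniq s4 P_s s_not_nbrs) => q q_s.
case: (sxy q q_s) => //; rewrite x_ky linearZ /= => /eqP.
by rewrite mulf_eq0 (negPf k_neq0) => /eqP.
Qed.

End GeneralPosition.

Section Faces.
Variables (f G g : int -> int -> vec4).
Hypothesis G_gp : general_position is_odd is_even G.
Hypothesis fG_off : forall p q : pt, is_even p -> is_odd q ->
  pairing (G q.1 q.2) (f p.1 p.2) != 0.
Hypothesis g_meet : forall i j : int, is_even (i, j) -> is_meet_point G i j (g i j).

Lemma meet_point_on i j k l : is_even (i, j) -> (k, l) \in nbrs (i, j) ->
  pairing (G k l) (g i j) = 0.
Proof. by move=> ij_even; have [_] := g_meet ij_even; apply. Qed.

Lemma meet_points_free i j s : is_even (i, j) -> s = 1 \/ s = -1 ->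
  free [:: g i j; g (i + 1) (j + s)].
Proof.
move=> ij_even s1.
have ij'_even : is_even (i + 1, j + s) by lattice_arith.
have [g_neq0 _] := g_meet ij_even; have [g'_neq0 _] := g_meet ij'_even.
(* Three planes through [g i j] and one through the other meet point, not all
   around a single vertex. *)
pose planes := [:: (i - 1, j); (i + 1, j); (i, j + s); (i + 2, j + s)].
apply: (gp_free_incident2 G_gp (s := planes)) => //.
- by lattice_arith.
- by lattice_arith.
- by apply: (not_perm_nbrs_far (a := (i - 1, j)) (b := (i + 2, j + s)));
    rewrite ?inE ?eqxx ?orbT //=; lia.
- move=> [k l]; rewrite !inE => /or4P[] /eqP[-> ->]; [left | left | left | right];
    apply: meet_point_on => //; lattice_arith.
Qed.

Lemma square_coherent_coplanar i j s : is_even (i, j) -> s = 1 \/ s = -1 ->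
  coherent [:: f i j; f (i + 1) (j + s)] [:: G i (j + s); G (i + 1) j] <->
  coplanar4 (f i j) (g i j) (f (i + 1) (j + s)) (g (i + 1) (j + s)).
Proof.
move=> ij_even s1.
have ij'_even : is_even (i + 1, j + s) by lattice_arith.
apply: coherent2_dependent; try by apply: meet_point_on; lattice_arith.
- by apply: (gp_free2 G_gp (p := (i, j + s)) (q := (i + 1, j))); lattice_arith.
- exact: meet_points_free.
- by apply: (fG_off (p := (i + 1, j + s)) (q := (i, j + s))); lattice_arith.
- by apply: (fG_off (p := (i, j)) (q := (i + 1, j))); lattice_arith.
- by apply: (fG_off (p := (i + 1, j + s)) (q := (i + 1, j))); lattice_arith.
Qed.

Lemma faces_coherent_F_transforms :
  (forall i j, face_coherent f G i j) <-> F_transforms f g.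
Proof.
have face_even i j : is_even (i, j) -> face_coherent f G i j <->
    coherent [:: f i j; f (i + 1) (j + 1)] [:: G i (j + 1); G (i + 1) j].
  by rewrite /face_coherent => ->.
have face_odd i j : is_even (i, j) -> face_coherent f G i (j - 1) <->
    coherent [:: f i j; f (i + 1) (j - 1)] [:: G i (j - 1); G (i + 1) j].
  move=> ij_even; rewrite /face_coherent ifF ?subrK; first exact: coherent2C.
  by apply/negbTE; lattice_arith.
split=> [coh i j ij_even s [->|->] | Ftr i j].
- apply/(square_coherent_coplanar ij_even (or_introl erefl)).
  by apply/(face_even _ _ ij_even); apply: coh.
- apply/(square_coherent_coplanar ij_even (or_intror erefl)).
  by apply/(face_odd _ _ ij_even); apply: coh.
- have [ij_even | ij_odd] := boolP (is_even (i, j)).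
    apply/(face_even _ _ ij_even)/(square_coherent_coplanar ij_even (or_introl erefl)).
    exact: Ftr _ _ ij_even 1 (or_introl erefl).
  have ij1_even : is_even (i, j + 1) by lattice_arith.
  rewrite -[j](addrK 1); apply/(face_odd _ _ ij1_even).
  apply/(square_coherent_coplanar ij1_even (or_intror erefl)).
  exact: Ftr _ _ ij1_even (-1) (or_intror erefl).
Qed.

End Faces.

Lemma nbr_labels_dependent f G :
  (forall p, dependent (nbr_labels f G p)) <-> Qnet_e f /\ Qstarnet_o G.
Proof.
rewrite /nbr_labels; split=> [dep | [f_Q G_Qs] [i j]].
- by split=> i j ij; have := dep (i, j); [rewrite is_evenE ij | rewrite ij].
- case: ifP => [ij_even | /negbT]; first exact: G_Qs.
  by rewrite is_evenE negbK; apply: f_Q.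
Qed.

Lemma circuit_nbr_labels f G p :
  general_position is_even is_odd f -> general_position is_odd is_even G ->
  circuit (nbr_labels f G p) <-> dependent (nbr_labels f G p).
Proof.
move=> f_gp G_gp; split=> [[] // | dep]; split=> // m; rewrite /nbr_labels.
case: ifP => p_even; rewrite size_map => m4 m_proper.
- exact: (gp_free_mask_nbrs G_gp (all_odd_nbrs p_even)).
- apply: (gp_free_mask_nbrs f_gp) => //; apply: all_even_nbrs.
  by rewrite -[is_odd p]negbK -is_evenE p_even.
Qed.

Theorem mainTheorem8 (f G : int -> int -> vec4) (Hgen : generic f G) :
  ((forall p : pt, circuit (nbr_labels f G p)) <-> (Qnet_e f /\ Qstarnet_o G)) /\
  (Qnet_e f -> Qstarnet_o G ->
   forall g : int -> int -> vec4,
     (forall i j : int, is_even (i, j) -> is_meet_point G i j (g i j)) ->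
     ((forall i j : int, face_coherent f G i j) <-> F_transforms f g)).
Proof.
have [f_gp [G_gp fG_off]] := Hgen.
(* Part (F) does not use the Q-net conditions: the meet points are given. *)
split=> [|_ _ g g_meet]; last exact: faces_coherent_F_transforms.
rewrite -nbr_labels_dependent.
by split=> labels p; apply/(circuit_nbr_labels p f_gp G_gp)/labels.
Qed.
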